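(* For any odd prime $p$ and any positive integer $r$, $$p^rH_{p^r-1}(1)\equiv pH_{p-1}(1),\qquad p^{2r}H_{p^r-1}(1,1)\equiv p^2H_{p-1}(1,1),\qquad p^{3r}H_{p^r-1}(1,1,1)\equiv p^3H_{p-1}(1,1,1)\pmod{p^4}.$$
   Context: For positive integers $s_1,\dots,s_m$ and an integer $n\ge0$, $H_n(s_1,\dots,s_m)=\sum_{1\le k_1<\cdots<k_m\le n}\frac{1}{k_1^{s_1}\cdots k_m^{s_m}}$. A congruence $a\equiv b\pmod{p^m}$ between rational numbers means that $(a-b)/p^m$ is a rational number whose denominator is not divisible by $p$. *)

From mathcomp Require Import all_boot all_order all_algebra.
Set Implicit Arguments. Unset Strict Implicit. Unset Printing Implicit Defensive.
Import Order.TTheory GRing.Theory Num.Theory.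
Local Open Scope ring_scope.

(* An index tuple is a function
   k : 'I_m -> 'I_n, with the actual integer k_i being (k i).+1. *)
Definition mhs (n : nat) (s : seq nat) : rat :=
  \sum_(k : {ffun 'I_(size s) -> 'I_n}
         | [forall i : 'I_(size s), forall j : 'I_(size s),
              (i < j)%N ==> (k i < k j)%N])
    \prod_(i : 'I_(size s)) ((((k i).+1 ^ (nth 0%N s i))%N)%:R)^-1.

Definition ratcong (p m : nat) (a b : rat) : Prop :=
  ~~ (p %| `|denq ((a - b) / (p ^ m)%:R)|)%N.

From HB Require Import structures.
From mathcomp Require Import all_boot all_order all_algebra.
From mathcomp Require Import zify ring.
Set Implicit Arguments. Unset Strict Implicit. Unset Printing Implicit Defensive.
Import Order.TTheory GRing.Theory Num.Theory.
Local Open Scope ring_scope.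

(* Congruences between rationals are read in the ring of p-integral rationals
   (denominator prime to p), equipped below with a subring structure so that the
   generic closure lemmas (rpredD, rpredM, rpred_sum, ...) apply to it.
   By Newton's identities H_n(1,1) and H_n(1,1,1) are polynomials, with
   denominators 2 and 6, in the power sums P_n(k) = sum_{i <= n} i^-k.
   For N = p^r, the scaled power sum N^k P_{N-1}(k) = sum_{0<i<N} (N/i)^k splits
   into the indices divisible by p^(r-1), which contribute exactly p^k P_{p-1}(k),
   and a tail over the other indices, where each N/i is p^2 times a p-integral
   number: the tail is divisible by p^(2k), and for k = 1 pairing i with N - i
   shows that it is even divisible by p^4.  An algebraic transfer lemma carries
   these congruences of power sums through the Newton polynomials (p odd makes 2
   and p/6 p-integral), and the theorem follows. *)

Section PIntegral.
Variable p : nat.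

Definition p_integral_subdef : pred rat := fun q => coprime p `|denq q|.
Definition p_integral := [qualify a q : rat | p_integral_subdef q].

Lemma p_integralP q :
  reflect (exists2 b : nat, coprime p b & q * b%:R \is a Num.int) (q \is a p_integral).
Proof.
apply: (iffP idP) => [cpd | [b cpb /intrP [z qbz]]].
  exists `|denq q|%N => //.
  by rewrite pmulrn gez0_abs ?denq_ge0 // -numqE rpred_int.
have num_den : (numq q * b%:Z = z * denq q)%R.
  apply: (@intr_inj rat).
  by rewrite !rmorphM /= numqE -qbz /= -mulrA [_ * (b%:Z)%:~R]mulrC mulrA.
have : (`|denq q| %| `|numq q| * b)%N.
  by have := congr1 absz num_den; rewrite !abszM /= => ->; apply: dvdn_mull.
rewrite Gauss_dvdr; last by rewrite coprime_sym coprime_num_den.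
by move=> /coprime_dvdr; apply.
Qed.

Fact p_integral_subring : subring_closed p_integral.
Proof.
split; first by apply/p_integralP; exists 1%N; rewrite ?coprimen1 // mulr1.
  move=> a b /p_integralP[x cx hx] /p_integralP[y cy hy]; apply/p_integralP.
  exists (x * y)%N; first by rewrite coprimeMr cx.
  have -> : (a - b) * (x * y)%N%:R = (a * x%:R) * y%:R - (b * y%:R) * x%:R.
    by rewrite natrM; ring.
  by rewrite rpredB // rpredM // rpred_nat.
move=> a b /p_integralP[x cx hx] /p_integralP[y cy hy]; apply/p_integralP.
exists (x * y)%N; first by rewrite coprimeMr cx.
have -> : (a * b) * (x * y)%N%:R = (a * x%:R) * (b * y%:R) by rewrite natrM; ring.
by rewrite rpredM.
Qed.

HB.instance Definition _ := GRing.isSubringClosed.Build rat p_integral_subdef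
  p_integral_subring.

Lemma p_integral_invn n : coprime p n -> (n%:R)^-1 \is a p_integral.
Proof.
move=> cpn; apply/p_integralP; exists n => //.
have [->|n0] := eqVneq n 0%N; first by rewrite mulr0 rpred0.
by rewrite mulVf ?pnatr_eq0 // rpred1.
Qed.

Lemma p_integral_half : odd p -> (2%:R)^-1 \is a p_integral.
Proof. by move=> p_odd; apply: p_integral_invn; rewrite coprimen2. Qed.

Hypothesis p_prime : prime p.

(* For an odd prime [p], [p / 6] is [p]-integral ([6] is prime to [p], except
   for [p = 3] where [p / 6 = 1/2]); it is the denominator of the depth-3 Newton
   polynomial. *)
Lemma p_integral_p_div6 : odd p -> p%:R / 6%:R \is a p_integral.
Proof.
move=> p_odd; have [->|p_neq3] := eqVneq p 3%N.
  by rewrite (_ : 3%:R / 6%:R = (2%:R)^-1 :> rat) ?p_integral_half //; field.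
rewrite rpredM ?rpred_nat ?p_integral_invn // (_ : 6 = 2 * 3)%N // coprimeMr.
by rewrite coprimen2 p_odd prime_coprime // dvdn_prime2.
Qed.

Lemma p_integral_pow_div e i :
  (0 < i)%N -> ~~ (p ^ e.+1 %| i)%N -> (p ^ e)%:R / i%:R \is a p_integral.
Proof.
move=> i_gt0 ndvd; have [m cpm iE] := pfactor_coprime p_prime i_gt0.
have j_le_e : (logn p i <= e)%N by rewrite leqNgt -pfactor_dvdn.
move: (logn p i) iE j_le_e => j iE j_le_e.
have m0 : m%:R != 0 :> rat.
  by rewrite pnatr_eq0; apply: contraTneq i_gt0 => m0; rewrite iE m0.
have pj0 : (p ^ j)%:R != 0 :> rat by rewrite pnatr_eq0 -lt0n expn_gt0 prime_gt0.
apply/p_integralP; exists m => //.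
rewrite (_ : _ * _ = (p ^ (e - j))%:R) ?rpred_nat //.
by rewrite -{1}(subnK j_le_e) iE expnD !natrM; field; rewrite m0 pj0.
Qed.

Lemma ratcong_integral m a b :
  (a - b) / (p ^ m)%:R \is a p_integral -> ratcong p m a b.
Proof. by rewrite /ratcong -prime_coprime. Qed.

End PIntegral.

Section Newton.
Variables (R : numFieldType) (x : nat -> R).

Definition pow_sum n k := \sum_(i < n) x i ^+ k.

Definition esym2 n := \sum_(i < n) pow_sum i 1 * x i.
Definition esym3 n := \sum_(i < n) esym2 i * x i.

Definition newton2 (s1 s2 : R) := (s1 ^+ 2 - s2) / 2.
Definition newton3 (s1 s2 s3 : R) := (s1 ^+ 3 - 3 * s1 * s2 + 2 * s3) / 6.

Lemma pow_sumS n k : pow_sum n.+1 k = pow_sum n k + x n ^+ k.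
Proof. by rewrite /pow_sum big_ord_recr. Qed.

Lemma esym2_newton n : esym2 n = newton2 (pow_sum n 1) (pow_sum n 2).
Proof.
rewrite /newton2; elim: n => [|n IHn].
  by rewrite /esym2 /pow_sum !big_ord0 expr0n /= subrr mul0r.
rewrite /esym2 big_ord_recr /= -/(esym2 n) IHn !pow_sumS; by field.
Qed.

Lemma esym3_newton n :
  esym3 n = newton3 (pow_sum n 1) (pow_sum n 2) (pow_sum n 3).
Proof.
rewrite /newton3; elim: n => [|n IHn].
  by rewrite /esym3 /pow_sum !big_ord0 expr0n /= !mulr0 subrr addr0 mul0r.
rewrite /esym3 big_ord_recr /= -/(esym3 n) IHn esym2_newton /newton2 !pow_sumS.
by field.
Qed.

Lemma newton2_scale c s1 s2 :
  c ^+ 2 * newton2 s1 s2 = newton2 (c * s1) (c ^+ 2 * s2).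
Proof. by rewrite /newton2; field. Qed.

Lemma newton3_scale c s1 s2 s3 :
  c ^+ 3 * newton3 s1 s2 s3 = newton3 (c * s1) (c ^+ 2 * s2) (c ^+ 3 * s3).
Proof. by rewrite /newton3; field. Qed.

End Newton.

Definition harm (i : nat) : rat := (i.+1)%:R^-1.

(* Index tuples of [mhs] of depths 1, 2, 3, listed from the largest index down. *)
Definition single_fun n (a : 'I_n) : {ffun 'I_1 -> 'I_n} := [ffun=> a].
Definition pair_fun n (t : 'I_n * 'I_n) : {ffun 'I_2 -> 'I_n} :=
  [ffun i : 'I_2 => if val i == 0%N then t.2 else t.1].
Definition triple_fun n (t : 'I_n * ('I_n * 'I_n)) : {ffun 'I_3 -> 'I_n} :=
  [ffun i : 'I_3 => if val i == 0%N then t.2.2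
                    else if val i == 1%N then t.2.1 else t.1].

Lemma single_fun_bij n : bijective (@single_fun n).
Proof.
exists (fun f : {ffun _ -> _} => f ord0) => [a|f]; first by rewrite ffunE.
by apply/ffunP => -[[|//] i1]; rewrite ffunE; congr (f _); apply: val_inj.
Qed.

Lemma pair_fun_bij n : bijective (@pair_fun n).
Proof.
exists (fun f : {ffun _ -> _} => (f ord_max, f ord0)) => [[a b]|f].
  by rewrite !ffunE.
by apply/ffunP => -[[|[|//]] i2]; rewrite ffunE; congr (f _); apply: val_inj.
Qed.

Lemma triple_fun_bij n : bijective (@triple_fun n).
Proof.
exists (fun f : {ffun _ -> _} =>
          (f ord_max, (f (Ordinal (isT : (1 < 3)%N)), f ord0))) => [[a [b c]]|f].
  by rewrite !ffunE.
by apply/ffunP => -[[|[|[|//]]] i3]; rewrite ffunE; congr (f _); apply: val_inj.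
Qed.

Lemma mhs_single n : mhs n [:: 1%N] = pow_sum harm n 1.
Proof.
rewrite /mhs (reindex (@single_fun n)) /=; last exact: onW_bij (single_fun_bij n).
apply: eq_big => [a|a _]; last by rewrite big_ord1 ffunE expn1 expr1.
by apply/forallP => -[[|//] ?]; apply/forallP => -[[|//] ?].
Qed.

Lemma pair_fun_incr n (t : 'I_n * 'I_n) :
  [forall i : 'I_2, forall j : 'I_2, (i < j)%N ==> (pair_fun t i < pair_fun t j)%N]
  = (t.2 < t.1)%N.
Proof.
apply/forallP/idP => [incr | lt21 i].
  by have := forallP (incr ord0) ord_max; rewrite !ffunE.
by apply/forallP => j; rewrite !ffunE; case: i j => -[|[|//]] ? [[|[|//]] ?].
Qed.

Lemma mhs_pair n : mhs n [:: 1%N; 1%N] = esym2 harm n.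
Proof.
rewrite /mhs (reindex (@pair_fun n)) /=; last exact: onW_bij (pair_fun_bij n).
under eq_bigl => t do rewrite pair_fun_incr.
transitivity (\sum_(b < n) \sum_(a < n | (a < b)%N) harm a * harm b).
  rewrite pair_big_dep; apply: eq_bigr => -[b a] _.
  by rewrite big_ord_recr big_ord1 !ffunE /= expn1.
apply: eq_bigr => b _.
rewrite /pow_sum (big_ord_widen_cond _ xpredT _ (ltnW (ltn_ord b))).
by rewrite mulr_suml.
Qed.

Lemma triple_fun_incr n (t : 'I_n * ('I_n * 'I_n)) :
  [forall i : 'I_3, forall j : 'I_3, (i < j)%N ==> (triple_fun t i < triple_fun t j)%N]
  = (t.2.1 < t.1)%N && (t.2.2 < t.2.1)%N.
Proof.
apply/forallP/andP => [incr | [lt10 lt21] i].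
  have := forallP (incr ord0) (Ordinal (isT : (1 < 3)%N)).
  have := forallP (incr (Ordinal (isT : (1 < 3)%N))) ord_max.
  by rewrite !ffunE /= => -> ->.
apply/forallP => j; rewrite !ffunE.
by case: i j => -[|[|[|//]]] ? [[|[|[|//]]] ?] //=; rewrite (ltn_trans lt21).
Qed.

Lemma mhs_triple n : mhs n [:: 1%N; 1%N; 1%N] = esym3 harm n.
Proof.
rewrite /mhs (reindex (@triple_fun n)) /=; last exact: onW_bij (triple_fun_bij n).
under eq_bigl => t do rewrite triple_fun_incr.
transitivity (\sum_(c < n) \sum_(b < n | (b < c)%N) \sum_(a < n | (a < b)%N)
                harm a * harm b * harm c).
  under [RHS]eq_bigr => c _ do rewrite pair_big_dep.
  rewrite pair_big_dep; apply: eq_bigr => -[c [b a]] _.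
  by rewrite !big_ord_recr big_ord0 !ffunE /= expn1 mul1r.
apply: eq_bigr => c _.
rewrite /esym2 (big_ord_widen_cond _ xpredT (fun i => pow_sum harm i 1 * harm i)
                  (ltnW (ltn_ord c))) mulr_suml.
apply: eq_bigr => b _.
by rewrite /pow_sum (big_ord_widen_cond _ xpredT _ (ltnW (ltn_ord b))) !mulr_suml.
Qed.

Lemma scaled_pow_sum M k : (0 < M)%N ->
  M%:R ^+ k * pow_sum harm M.-1 k = \sum_(1 <= i < M) (M%:R / i%:R) ^+ k.
Proof.
move=> M_gt0; rewrite big_add1 big_mkord /pow_sum mulr_sumr.
by apply: eq_bigr => i _; rewrite /harm -exprMn.
Qed.

Lemma filter_multiples c d : (0 < c)%N ->
  [seq i <- index_iota 1 (c * d) | c %| i]%N = [seq (c * m)%N | m <- index_iota 1 d].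
Proof.
move=> c_gt0; apply: (irr_sorted_eq ltn_trans ltnn).
- by apply: sorted_filter; [exact: ltn_trans | exact: iota_ltn_sorted].
- apply: (homo_sorted (e := ltn)); last exact: iota_ltn_sorted.
  by move=> x y; rewrite ltn_pmul2l.
move=> i; rewrite mem_filter mem_index_iota; apply/idP/mapP.
  case/andP => /dvdnP [m ->] /andP[m_gt0 lt_mc]; exists m; last by rewrite mulnC.
  rewrite mem_index_iota; apply/andP; split.
    by move: m_gt0; rewrite muln_gt0 => /andP[].
  by move: lt_mc; rewrite mulnC ltn_pmul2l.
case=> m; rewrite mem_index_iota => /andP[m_gt0 lt_md] ->.
by rewrite dvdn_mulr // muln_gt0 c_gt0 m_gt0 ltn_pmul2l.
Qed.

Lemma sum_multiples (R : nmodType) (F : nat -> R) c d : (0 < c)%N ->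
  \sum_(1 <= i < c * d | (c %| i)%N) F i = \sum_(1 <= m < d) F (c * m)%N.
Proof. by move=> c_gt0; rewrite -big_filter filter_multiples // big_map. Qed.

Section Tail.
Variables (p r : nat).
Hypotheses (p_prime : prime p) (r_gt0 : (0 < r)%N).

Let p_gt0 : (0 < p)%N := prime_gt0 p_prime.

Definition tail_sum k : rat :=
  \sum_(1 <= i < p ^ r | ~~ (p ^ r.-1 %| i)%N) ((p ^ r)%:R / i%:R) ^+ k.

Lemma pow_sum_split k :
  (p ^ r)%:R ^+ k * pow_sum harm (p ^ r).-1 k
  = p%:R ^+ k * pow_sum harm p.-1 k + tail_sum k.
Proof.
rewrite !scaled_pow_sum ?expn_gt0 ?p_gt0 // (bigID (fun i => p ^ r.-1 %| i)%N) /=.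
congr (_ + _).
have pr : (p ^ r = p ^ r.-1 * p)%N by rewrite -expnSr prednK.
rewrite [in LHS]pr sum_multiples ?expn_gt0 ?p_gt0 //.
rewrite [LHS]big_nat_cond [RHS]big_nat_cond; apply: eq_bigr => m /andP[/andP[m_gt0 _] _].
have m0 : m%:R != 0 :> rat by rewrite pnatr_eq0 -lt0n.
have c0 : (p ^ r.-1)%:R != 0 :> rat by rewrite pnatr_eq0 -lt0n expn_gt0 p_gt0.
by rewrite !natrM; congr (_ ^+ _); field; rewrite m0 c0.
Qed.

Lemma tail_index i : (0 < i)%N -> ~~ (p ^ r.-1 %| i)%N ->
  (2 <= r)%N /\ (p ^ (r - 2))%:R / i%:R \is a p_integral p.
Proof.
move=> i_gt0 ndvd.
have r_ge2 : (2 <= r)%N by move: ndvd; case: (r) => [|[|]] //; rewrite expn0 dvd1n.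
split=> //; apply: p_integral_pow_div => //.
by rewrite (_ : (r - 2).+1 = r.-1) //; lia.
Qed.

Lemma natr_pow_split : (2 <= r)%N ->
  (p ^ r)%:R = p%:R ^+ 2 * (p ^ (r - 2))%:R :> rat.
Proof. by move=> r_ge2; rewrite -natrX -natrM -expnD subnKC. Qed.

(* Each tail term [N / i] is [p^2] times a [p]-integral number. *)
Lemma tail_sum_integral k : tail_sum k / p%:R ^+ (2 * k) \is a p_integral p.
Proof.
rewrite /tail_sum mulr_suml big_nat_cond.
apply: rpred_sum => i /andP[/andP[i_gt0 _] ndvd].
have [r_ge2 int_i] := tail_index i_gt0 ndvd.
have pk0 : p%:R ^+ (2 * k) != 0 :> rat by rewrite expf_neq0 // pnatr_eq0 -lt0n.
by rewrite natr_pow_split // -mulrA exprMn -exprM mulrAC divff ?mul1r ?rpredX.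
Qed.

Lemma tail_pair_term i : (2 <= r)%N -> (0 < i < p ^ r)%N ->
  (p ^ r)%:R / i%:R + (p ^ r)%:R / (p ^ r - i)%:R
  = p%:R ^+ 4 * ((p ^ (r - 2))%:R / i%:R * ((p ^ (r - 2))%:R / (p ^ r - i)%:R)) :> rat.
Proof.
move=> r_ge2 /andP[i_gt0 i_lt]; rewrite natrB ?(ltnW i_lt) //.
have i0 : i%:R != 0 :> rat by rewrite pnatr_eq0 -lt0n.
have Ni0 : (p ^ r)%:R - i%:R != 0 :> rat.
  by rewrite -natrB ?(ltnW i_lt) // pnatr_eq0 subn_eq0 -ltnNge.
rewrite natr_pow_split // in Ni0 *; move: (p ^ (r - 2))%:R Ni0 => q Ni0.
by field; rewrite i0 Ni0.
Qed.

(* For [k = 1], pairing [i] with [N - i] gains the factor [p^4]. *)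
Lemma tail_sum1_integral : odd p -> tail_sum 1 / p%:R ^+ 4 \is a p_integral p.
Proof.
move=> p_odd; set N := (p ^ r)%N.
pose y i : rat := (p ^ (r - 2))%:R / i%:R.
set S := \sum_(1 <= i < N | ~~ (p ^ r.-1 %| i)%N) y i * y (N - i)%N.
have N_div : (p ^ r.-1 %| N)%N by rewrite dvdn_exp2l // leq_pred.
have reflected : tail_sum 1 =
    \sum_(1 <= i < N | ~~ (p ^ r.-1 %| i)%N) N%:R / (N - i)%:R.
  rewrite /tail_sum big_nat_rev /=.
  under eq_bigl => i do rewrite add1n subSS.
  under eq_bigr => i _ do rewrite add1n subSS expr1.
  rewrite [LHS]big_nat_cond [RHS]big_nat_cond; apply: eq_bigl => i.
  case: (boolP (1 <= i < N)%N) => //= /andP[_ i_lt].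
  by rewrite dvdn_subr ?(ltnW i_lt).
have doubled : tail_sum 1 + tail_sum 1 = p%:R ^+ 4 * S.
  rewrite {2}reflected {1}/tail_sum -big_split mulr_sumr /=.
  rewrite [LHS]big_nat_cond [RHS]big_nat_cond.
  apply: eq_bigr => i /andP[i_range ndvd]; have [i_gt0 _] := andP i_range.
  have [r_ge2 _] := tail_index i_gt0 ndvd.
  by rewrite expr1 tail_pair_term.
have p0 : p%:R != 0 :> rat by rewrite pnatr_eq0 -lt0n.
have -> : tail_sum 1 / p%:R ^+ 4 = (tail_sum 1 + tail_sum 1) / p%:R ^+ 4 / 2%:R.
  by field; rewrite p0.
rewrite doubled [_ * S]mulrC mulfK ?expf_neq0 // rpredM ?p_integral_half //.
rewrite /S big_nat_cond; apply: rpred_sum => i /andP[/andP[i_gt0 i_lt] ndvd].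
have [_ int_i] := tail_index i_gt0 ndvd.
have Ni_gt0 : (0 < N - i)%N by rewrite subn_gt0.
have Ni_ndvd : ~~ (p ^ r.-1 %| N - i)%N by rewrite dvdn_subr ?(ltnW i_lt).
have [_ int_Ni] := tail_index Ni_gt0 Ni_ndvd.
by rewrite rpredM.
Qed.

End Tail.

Section NewtonCongruence.
Variable p : nat.
Hypotheses (p_prime : prime p) (p_odd : odd p).

Let p0 : p%:R != 0 :> rat.
Proof. by rewrite pnatr_eq0 -lt0n prime_gt0. Qed.

Lemma newton2_congr a1 a2 b1 b2 :
  b1 / p%:R \is a p_integral p ->
  (a1 - b1) / p%:R ^+ 4 \is a p_integral p ->
  (a2 - b2) / p%:R ^+ 4 \is a p_integral p ->
  (newton2 a1 a2 - newton2 b1 b2) / p%:R ^+ 4 \is a p_integral p.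
Proof.
set u := b1 / _; set e := (a1 - b1) / _; set d := (a2 - b2) / _.
move=> int_u int_e int_d.
have -> : (newton2 a1 a2 - newton2 b1 b2) / p%:R ^+ 4
    = (e * (2%:R * p%:R * u + p%:R ^+ 4 * e) - d) / 2%:R.
  by rewrite /newton2 /u /e /d; field; rewrite p0.
clearbody u e d.
rewrite rpredM ?p_integral_half //.
by rewrite !(rpredB, rpredD, rpredM, rpredX, rpred_nat, rpred1).
Qed.

Lemma newton3_congr a1 a2 a3 b1 b2 b3 :
  b1 / p%:R \is a p_integral p ->
  b2 / p%:R ^+ 2 \is a p_integral p ->
  (a1 - b1) / p%:R ^+ 4 \is a p_integral p ->
  (a2 - b2) / p%:R ^+ 4 \is a p_integral p ->
  (a3 - b3) / p%:R ^+ 6 \is a p_integral p ->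
  (newton3 a1 a2 a3 - newton3 b1 b2 b3) / p%:R ^+ 4 \is a p_integral p.
Proof.
set u := b1 / _; set v := b2 / _; set e := (a1 - b1) / _; set d := (a2 - b2) / _.
set f := (a3 - b3) / _ => int_u int_v int_e int_d int_f; set q : rat := p%:R.
have -> : (newton3 a1 a2 a3 - newton3 b1 b2 b3) / q ^+ 4 = q / 6%:R *
    (q * e * ((u + q ^+ 3 * e) ^+ 2 + (u + q ^+ 3 * e) * u + u ^+ 2)
     - 3%:R * ((u + q ^+ 3 * e) * d + q * e * v) + 2%:R * q * f).
  by rewrite /newton3 /u /v /e /d /f; field; rewrite p0.
clearbody u v e d f.
rewrite rpredM ?p_integral_p_div6 //.
by rewrite !(rpredB, rpredD, rpredM, rpredX, rpred_nat, rpred1).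
Qed.

End NewtonCongruence.

Lemma harm_pow_sum_integral p k :
  prime p -> pow_sum harm p.-1 k \is a p_integral p.
Proof.
move=> p_prime; apply: rpred_sum => i _; apply/rpredX/p_integral_invn.
rewrite prime_coprime // gtnNdvd //.
by have := ltn_ord i; have := prime_gt1 p_prime; lia.
Qed.

Unset Implicit Arguments.

Theorem lemma3p1 (p r : nat) :
  prime p -> odd p -> (0 < r)%N ->
  [/\ ratcong p 4 ((p ^ r)%N%:R * mhs (p ^ r).-1 [:: 1%N])
                  (p%:R * mhs p.-1 [:: 1%N]),
      ratcong p 4 ((p ^ (2 * r))%N%:R * mhs (p ^ r).-1 [:: 1%N; 1%N])
                  ((p ^ 2)%N%:R * mhs p.-1 [:: 1%N; 1%N])
    & ratcong p 4 ((p ^ (3 * r))%N%:R * mhs (p ^ r).-1 [:: 1%N; 1%N; 1%N])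
                  ((p ^ 3)%N%:R * mhs p.-1 [:: 1%N; 1%N; 1%N])].
Proof.
move=> p_prime p_odd r_gt0.
pose a k := (p ^ r)%:R ^+ k * pow_sum harm (p ^ r).-1 k.
pose b k := p%:R ^+ k * pow_sum harm p.-1 k.
have a_sub_b k : a k - b k = tail_sum p r k.
  by rewrite /a pow_sum_split // addrC addKr.
have b_int k : b k / p%:R ^+ k \is a p_integral p.
  rewrite mulrC mulKf ?harm_pow_sum_integral //.
  by rewrite expf_neq0 // pnatr_eq0 -lt0n prime_gt0.
have natr_pow k m : (p ^ (k * m))%:R = (p ^ m)%:R ^+ k :> rat.
  by rewrite -natrX -expnM mulnC.
have tail1 : (a 1 - b 1) / p%:R ^+ 4 \is a p_integral p.
  by rewrite a_sub_b tail_sum1_integral.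
have tail k : (a k - b k) / p%:R ^+ (2 * k) \is a p_integral p.
  by rewrite a_sub_b tail_sum_integral.
split; apply: (ratcong_integral p_prime); rewrite [(p ^ 4)%N%:R]natrX.
- by rewrite !mhs_single; exact: tail1.
- rewrite !mhs_pair !esym2_newton natr_pow [(p ^ 2)%N%:R]natrX !newton2_scale.
  apply: (newton2_congr p_prime p_odd).
  + exact: b_int 1.
  + exact: tail1.
  + exact: tail 2.
- rewrite !mhs_triple !esym3_newton natr_pow [(p ^ 3)%N%:R]natrX !newton3_scale.
  apply: (newton3_congr p_prime p_odd).
  + exact: b_int 1.
  + exact: b_int 2.
  + exact: tail1.
  + exact: tail 2.
  + exact: tail 3.
Qed.
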